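(* Consider uniform sampling of $g$ from the global Clifford group $\mathrm{Cl}_n$ ($n\ge1$) with gate-dependent Pauli noise channels $\Lambda(g)$. Prepare $E_0=|0\cdots0\rangle\langle0\cdots0|$, apply $\omega(g)\Lambda(g)$, measure in the computational basis obtaining $x$ with probability $(E_x|\omega(g)\Lambda(g)|E_0)$, and compute $\hat f(g,x)=\frac{d\,(E_x|\omega(g)|E_0)-1}{d-1}$. Then $$\mathbb{E}_{g,x}[\hat f(g,x)]=\frac1{d+1}\cdot\frac1{d-1}\sum_{a\in\mathsf D\setminus\{0\}}\bar\lambda_a ,$$ i.e. $\frac1{d+1}$ times the average of $\bar\lambda_a$ over the $d-1$ nonzero labels $a$ of diagonal Pauli operators.
   Context: $d=2^n$; $(A|\mathcal X|B)=\mathrm{Tr}(A^\dagger\mathcal X(B))$; $\omega(g)(A)=gAg^\dagger$; $E_x=|x\rangle\langle x|$. Per-qubit Pauli labels $\sigma_{00}=\mathbb 1,\sigma_{01}=X,\sigma_{11}=Y,\sigma_{10}=Z$, $\sigma_a=\bigotimes_i\sigma_{a_i}$; $\mathsf D=\{00,10\}^n$ is the set of labels of diagonal Pauli operators. Pauli channel: $\Lambda(\rho)=\sum_bq_b\sigma_b\rho\sigma_b$ with $q$ a probability vector, eigenvalues $\Lambda(g)(\sigma_a)=\lambda_a(g)\sigma_a$. $Z_z=\bigotimes_iZ^{z_i}$; for $g\in\mathrm{Cl}_n$, $\Xi_z(g)$ is the Pauli $\sigma_b$ with $g^\dagger Z_zg=\pm\sigma_b$. With $p$ uniform on $\mathrm{Cl}_n$: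 $s_a=\sum_z\sum_{g:\Xi_z(g)=\sigma_a}p(g)$ and $\bar\lambda_a=s_a^{-1}\sum_z\sum_{g:\Xi_z(g)=\sigma_a}p(g)\lambda_a(g)$. *)

From HB Require Import structures.
From mathcomp Require Import all_boot all_order all_algebra.
Set Implicit Arguments. Unset Strict Implicit. Unset Printing Implicit Defensive.
Import Order.TTheory GRing.Theory Num.Theory Num.Syntax.
Local Open Scope ring_scope.

(* The computational basis index
   x : 'I_(2^n) encodes the bit string (bit x j)_j in binary. *)

Definition bit (n : nat) (x : 'I_(2 ^ n)) (j : 'I_n) : bool := odd (x %/ 2 ^ j).

Definition label (n : nat) := {ffun 'I_n -> bool * bool}.

(* single-qubit Pauli entries: 00 = 1, 01 = X, 11 = Y, 10 = Z *)
Definition pauli1 {C : numClosedFieldType} (s : bool * bool) (r c : bool) : C :=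
  match s with
  | (false, false) => (r == c)%:R
  | (false, true)  => (r != c)%:R
  | (true, false)  => if r == c then (if r then -1 else 1) else 0
  | (true, true)   => if r == c then 0 else (if r then 'i else - 'i)
  end.

Definition pauli {C : numClosedFieldType} {n : nat} (a : label n) : 'M[C]_(2 ^ n) :=
  \matrix_(x, y) \prod_(j < n) pauli1 (a j) (bit x j) (bit y j).

Definition label0 (n : nat) : label n := [ffun => (false, false)].
Definition diag_label {n : nat} (a : label n) : bool := [forall i, ~~ (a i).2].

Definition adj {C : numClosedFieldType} {m : nat} (A : 'M[C]_m) : 'M[C]_m :=
  (map_mx (fun z => z^*) A)^T.

(* (A|X|B) = Tr(A^dagger X(B)) *)
Definition hs {C : numClosedFieldType} {m : nat} (A : 'M[C]_m)
  (X : 'M[C]_m -> 'M[C]_m) (B : 'M[C]_m) : C := \tr (adj A *m X B).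

Definition omega {C : numClosedFieldType} {m : nat} (g A : 'M[C]_m) : 'M[C]_m :=
  g *m A *m adj g.

Lemma pow2_gt0 (n : nat) : (0 < 2 ^ n)%N.
Proof. by rewrite expn_gt0. Qed.

Definition idx0 (n : nat) : 'I_(2 ^ n) := Ordinal (pow2_gt0 n).

Definition Ebasis {C : numClosedFieldType} {n : nat} (x : 'I_(2 ^ n)) : 'M[C]_(2 ^ n) :=
  delta_mx x x.

Definition unitary {C : numClosedFieldType} {m : nat} (g : 'M[C]_m) : Prop :=
  g *m adj g = 1%:M.

Definition clifford {C : numClosedFieldType} {n : nat} (g : 'M[C]_(2 ^ n)) : Prop :=
  unitary g /\
  forall a : label n, exists b : label n,
    omega g (pauli a) = pauli b \/ omega g (pauli a) = - pauli b.

Definition phase_eq {C : numClosedFieldType} {m : nat} (U g : 'M[C]_m) : Prop :=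
  exists c : C, `|c| = 1 /\ U = c *: g.

(* cl is a transversal of Cl_n modulo global phases, i.e. it represents
   the (finite) Clifford group Cl_n, each element exactly once *)
Definition clifford_transversal {C : numClosedFieldType} {n : nat}
  (cl : seq 'M[C]_(2 ^ n)) : Prop :=
  [/\ uniq cl,
      (forall g, g \in cl -> clifford g),
      (forall U, clifford U -> exists2 g, g \in cl & phase_eq U g) &
      (forall g h, g \in cl -> h \in cl -> phase_eq g h -> g = h)].

Definition pauli_channel {C : numClosedFieldType} {n : nat}
  (q : {ffun label n -> C}) (rho : 'M[C]_(2 ^ n)) : 'M[C]_(2 ^ n) :=
  \sum_b q b *: (pauli b *m rho *m pauli b).

Definition prob_vec {C : numClosedFieldType} {n : nat} (q : {ffun label n -> C}) : Prop :=
  (forall b, 0 <= q b) /\ \sum_b q b = 1.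

(* eigenvalue lambda_a of the Pauli channel: Lambda(sigma_a) = lambda_a sigma_a,
   hence lambda_a = (sigma_a|Lambda|sigma_a) / d *)
Definition eig {C : numClosedFieldType} {n : nat} (q : {ffun label n -> C}) (a : label n) : C :=
  hs (pauli a) (pauli_channel q) (pauli a) / (2 ^ n)%:R.

Definition zlabel {n : nat} (z : {ffun 'I_n -> bool}) : label n := [ffun i => (z i, false)].
Definition Zop {C : numClosedFieldType} {n : nat} (z : {ffun 'I_n -> bool}) : 'M[C]_(2 ^ n) :=
  pauli (zlabel z).

(* Xi_z(g) = sigma_a, i.e. g^dagger Z_z g = +- sigma_a *)
Definition Xi_is {C : numClosedFieldType} {n : nat} (z : {ffun 'I_n -> bool})
  (g : 'M[C]_(2 ^ n)) (a : label n) : bool :=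
  (adj g *m Zop z *m g == pauli a) || (adj g *m Zop z *m g == - pauli a).

(* uniform probability p(g) = 1/|Cl_n| on the transversal cl *)
Definition s_wt {C : numClosedFieldType} {n : nat} (cl : seq 'M[C]_(2 ^ n)) (a : label n) : C :=
  \sum_(z : {ffun 'I_n -> bool}) \sum_(g <- cl | Xi_is z g a) (size cl)%:R^-1.

Definition lambda_bar {C : numClosedFieldType} {n : nat} (cl : seq 'M[C]_(2 ^ n))
  (q : 'M[C]_(2 ^ n) -> {ffun label n -> C}) (a : label n) : C :=
  (s_wt cl a)^-1 *
  \sum_(z : {ffun 'I_n -> bool}) \sum_(g <- cl | Xi_is z g a)
     (size cl)%:R^-1 * eig (q g) a.

Definition fhat {C : numClosedFieldType} {n : nat} (g : 'M[C]_(2 ^ n)) (x : 'I_(2 ^ n)) : C :=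
  ((2 ^ n)%:R * hs (Ebasis x) (omega g) (Ebasis (idx0 n)) - 1) / ((2 ^ n)%:R - 1).

Definition outcome_prob {C : numClosedFieldType} {n : nat}
  (q : 'M[C]_(2 ^ n) -> {ffun label n -> C}) (g : 'M[C]_(2 ^ n)) (x : 'I_(2 ^ n)) : C :=
  hs (Ebasis x) (fun rho => omega g (pauli_channel (q g) rho)) (Ebasis (idx0 n)).

Definition expected_fhat {C : numClosedFieldType} {n : nat} (cl : seq 'M[C]_(2 ^ n))
  (q : 'M[C]_(2 ^ n) -> {ffun label n -> C}) : C :=
  \sum_(g <- cl) (size cl)%:R^-1 * \sum_(x : 'I_(2 ^ n)) outcome_prob q g x * fhat g x.

(* Write A = omega(g)(Lambda(g)(E_0)) and B = omega(g)(E_0), so that the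
   expectation of fhat given g is (d sum_x A_xx B_xx - tr A) / (d - 1).
   Expanding the product of diagonals over the diagonal Paulis Z_z gives
   d sum_x A_xx B_xx = sum_z tr(Z_z A) tr(Z_z B); the z = 0 term is tr A and
   cancels, while for z <> 0 we have g^dagger Z_z g = +-sigma_a with
   a = Xi_z(g) <> 0, and tr(Z_z A) tr(Z_z B) = lambda_a(g) [a in D] because
   E_0 only sees diagonal Paulis.  Regrouping the sum over g by a produces
   s_a lambdabar_a, and s_a = 1/(d+1) for every a <> 0: conjugation by the
   Cliffords (sigma_a + sigma_b)/sqrt 2, for anticommuting a and b, connects
   all nonzero labels, so s is constant on them, while s_0 = 1 and
   sum_a s_a = d. *)

From Stdlib Require Import IndefiniteDescription.
From HB Require Import structures.
From mathcomp Require Import all_boot all_order all_algebra ring.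
Import Order.TTheory GRing.Theory Num.Theory.
Set Implicit Arguments. Unset Strict Implicit.

Lemma nat_bits_inj (n x y : nat) : x < 2 ^ n -> y < 2 ^ n ->
  (forall j, j < n -> odd (x %/ 2 ^ j) = odd (y %/ 2 ^ j)) -> x = y.
Proof.
elim: n x y => [|n IH] x y; first by rewrite expn0 !ltnS !leqn0 => /eqP -> /eqP ->.
move=> ltx lty eq_bits.
have odd_xy := eq_bits 0%N (ltn0Sn n); rewrite !expn0 !divn1 in odd_xy.
have half_xy : x %/ 2 = y %/ 2.
  apply: IH => [||j ltjn]; rewrite ?ltn_divLR // -?expnSr //.
  by rewrite -!divnMA -expnS; apply: eq_bits.
by rewrite -(odd_double_half x) -(odd_double_half y) odd_xy -!divn2 half_xy.
Qed.

Local Open Scope ring_scope.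

Section Bits.
Variable n : nat.
Local Notation d := (2 ^ n)%N.

Definition bits (x : 'I_d) : {ffun 'I_n -> bool} := [ffun j => bit x j].

Lemma bits_inj : injective bits.
Proof.
move=> x y /ffunP eq_xy; apply/val_inj/(nat_bits_inj (ltn_ord x) (ltn_ord y)) => j ltjn.
by have := eq_xy (Ordinal ltjn); rewrite !ffunE.
Qed.

Lemma bits_bij : bijective bits.
Proof.
apply: inj_card_bij; first exact: bits_inj.
by rewrite card_ffun card_bool !card_ord.
Qed.

Lemma sum_bits (V : nmodType) (F : {ffun 'I_n -> bool} -> V) :
  \sum_(x : 'I_d) F (bits x) = \sum_v F v.
Proof. by rewrite (reindex bits) //; apply/onW_bij/bits_bij. Qed.

Lemma eq_bits (x y : 'I_d) : (x == y) = [forall j, bit x j == bit y j].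
Proof.
apply/eqP/forallP => [-> // | eq_xy]; apply: bits_inj.
by apply/ffunP => j; rewrite !ffunE; apply/eqP.
Qed.

Variable R : comPzRingType.

Lemma prod_bits_diag (F : 'I_n -> bool -> bool -> R) (x y : 'I_d) :
  (forall j r c, r != c -> F j r c = 0) ->
  \prod_j F j (bit x j) (bit y j) = (x == y)%:R * \prod_j F j (bit x j) (bit x j).
Proof.
move=> F_offdiag; have [<- | neq_xy] := eqVneq x y; first by rewrite mul1r.
have [j neq_j] : exists j, bit x j != bit y j.
  by apply/existsP; rewrite -negb_forall -eq_bits.
by rewrite (bigD1 j) //= F_offdiag // !mul0r.
Qed.

Lemma sum_prod_bits (F : 'I_n -> bool -> R) :
  \sum_(x : 'I_d) \prod_j F j (bit x j) = \prod_j \sum_(u : bool) F j u.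
Proof.
rewrite bigA_distr_bigA /= -(sum_bits (fun v => \prod_j F j (v j))).
by apply: eq_bigr => x _; apply: eq_bigr => j _; rewrite ffunE.
Qed.

Definition tensor_mx (f : 'I_n -> bool -> bool -> R) : 'M[R]_d :=
  \matrix_(x, y) \prod_j f j (bit x j) (bit y j).

Lemma tensor_mxM f g : tensor_mx f *m tensor_mx g =
  tensor_mx (fun j r c => \sum_(u : bool) f j r u * g j u c).
Proof.
apply/matrixP => x y; rewrite !mxE -sum_prod_bits.
by apply: eq_bigr => w _; rewrite !mxE -big_split.
Qed.

Lemma tensor_mx_trace f : \tr (tensor_mx f) = \prod_j \sum_(u : bool) f j u u.
Proof. by rewrite -sum_prod_bits; apply: eq_bigr => x _; rewrite mxE. Qed.

Lemma tensor_mxZ (k : 'I_n -> R) f :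
  tensor_mx (fun j r c => k j * f j r c) = (\prod_j k j) *: tensor_mx f.
Proof. by apply/matrixP => x y; rewrite !mxE big_split. Qed.

Lemma eq_tensor_mx f g : (forall j r c, f j r c = g j r c) -> tensor_mx f = tensor_mx g.
Proof. by move=> eq_fg; apply/matrixP => x y; rewrite !mxE; apply: eq_bigr. Qed.

Lemma tensor_mx1 f : (forall j r c, f j r c = (r == c)%:R) -> tensor_mx f = 1%:M.
Proof.
move=> f1; apply/matrixP => x y; rewrite !mxE prod_bits_diag => [|j r c].
  by rewrite big1 ?mulr1 // => j _; rewrite f1 eqxx.
by rewrite f1 => /negbTE ->.
Qed.

End Bits.

Lemma tensor_mx_adj (C : numClosedFieldType) n (f : 'I_n -> bool -> bool -> C) :
  adj (tensor_mx f) = tensor_mx (fun j r c => (f j c r)^*).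
Proof. by apply/matrixP => x y; rewrite !mxE rmorph_prod. Qed.

Section SingleQubit.
Variable C : numClosedFieldType.
Implicit Types s t : bool * bool.

Definition label_add1 s t := (s.1 (+) t.1, s.2 (+) t.2).

Definition pauli1_phase s t : C :=
  match s, t with
  | (false, true), (true, true) | (true, true), (true, false)
  | (true, false), (false, true) => 'i
  | (true, true), (false, true) | (true, false), (true, true)
  | (false, true), (true, false) => - 'i
  | _, _ => 1
  end.

Definition pauli1_sign s t : C :=
  if [&& s != (false, false), t != (false, false) & s != t] then -1 else 1.

Local Ltac pauli_table :=
  rewrite /= ?big_bool /= ?mulr1 ?mul1r ?mulr0 ?mul0r ?addr0 ?add0r
    ?mulrN ?mulNr ?opprK ?mulCii ?mulrN1 ?mulN1r ?eqxx ?oppr0 ?subrr ?addNr //.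

Lemma pauli1_mul s t r c : \sum_(u : bool) pauli1 s r u * pauli1 t u c =
  pauli1_phase s t * pauli1 (label_add1 s t) r c :> C.
Proof. by case: s t r c => [[] []] [[] []] [] []; pauli_table; pauli_table. Qed.

Lemma pauli1_comm s t r c : \sum_(u : bool) pauli1 s r u * pauli1 t u c =
  pauli1_sign s t * \sum_(u : bool) pauli1 t r u * pauli1 s u c :> C.
Proof.
by case: s t r c => [[] []] [[] []] [] []; rewrite /pauli1_sign; pauli_table; pauli_table.
Qed.

Lemma pauli1_sq s r c : \sum_(u : bool) pauli1 s r u * pauli1 s u c = (r == c)%:R :> C.
Proof. by case: s r c => [[] []] [] []; pauli_table; pauli_table. Qed.

Lemma pauli1_adj s r c : (pauli1 s c r)^* = pauli1 s r c :> C.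
Proof.
have conji : ('i : C)^* = - 'i := conjCi C.
have conjNi : (- 'i : C)^* = 'i by rewrite -conji conjCK.
by case: s r c => [[] []] [] []; rewrite /= ?rmorph1 ?rmorph0 ?rmorphN1 ?conji ?conjNi.
Qed.

Lemma pauli1_trace_mul s t :
  \sum_(u : bool) \sum_(v : bool) pauli1 s u v * pauli1 t v u = (s == t)%:R *+ 2 :> C.
Proof. by case: s t => [[] []] [[] []]; pauli_table; pauli_table; rewrite ?mul0rn. Qed.

Lemma pauli1_00 s : pauli1 s false false = (~~ s.2)%:R :> C.
Proof. by case: s => [[] []]. Qed.

Lemma pauli1_phase4 s t : pauli1_phase s t ^+ 4 = 1.
Proof.
have i4 : ('i : C) ^+ 4 = 1 by rewrite (exprM _ 2 2) sqrCi sqrrN expr1n.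
have Ni4 : (- 'i : C) ^+ 4 = 1 by rewrite -mulN1r exprMn i4 mulr1 -signr_odd.
by case: s t => [[] []] [[] []]; rewrite /= ?expr1n ?i4 ?Ni4.
Qed.

Lemma pauli1_sign_sqr s t : pauli1_sign s t ^+ 2 = 1.
Proof. by rewrite /pauli1_sign; case: ifP; rewrite ?sqrrN expr1n. Qed.

Lemma pauli1_signC s t : pauli1_sign s t = pauli1_sign t s.
Proof. by case: s t => [[] []] [[] []]. Qed.

Lemma pauli1_sign1r s : pauli1_sign (false, false) s = 1.
Proof. by case: s => [[] []]. Qed.

Lemma pauli1_signr1 s : pauli1_sign s (false, false) = 1.
Proof. by rewrite pauli1_signC pauli1_sign1r. Qed.

End SingleQubit.

Section Pauli.
Variables (C : numClosedFieldType) (n : nat).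
Local Notation d := (2 ^ n)%N.
Local Notation P := (@pauli C n).
Implicit Types a b : label n.

Definition label_add a b : label n := [ffun j => label_add1 (a j) (b j)].
Definition pauli_phase a b : C := \prod_j pauli1_phase C (a j) (b j).
Definition pauli_sign a b : C := \prod_j pauli1_sign C (a j) (b j).

Lemma pauliE a : P a = tensor_mx (fun j => pauli1 (a j)).
Proof. by []. Qed.

Lemma pauli_mul a b : P a *m P b = pauli_phase a b *: P (label_add a b).
Proof.
rewrite !pauliE tensor_mxM -tensor_mxZ; apply: eq_tensor_mx => j r c.
by rewrite pauli1_mul ffunE.
Qed.

Lemma pauli_comm a b : P a *m P b = pauli_sign a b *: (P b *m P a).
Proof.
rewrite !pauliE !tensor_mxM -tensor_mxZ; apply: eq_tensor_mx => j r c.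
exact: pauli1_comm.
Qed.

Lemma pauli_sq a : P a *m P a = 1%:M.
Proof. by rewrite pauliE tensor_mxM; apply: tensor_mx1 => j r c; apply: pauli1_sq. Qed.

Lemma pauli_adj a : adj (P a) = P a.
Proof. by rewrite pauliE tensor_mx_adj; apply: eq_tensor_mx => j r c; apply: pauli1_adj. Qed.

Lemma pauli0 : P (label0 n) = 1%:M.
Proof. by rewrite pauliE; apply: tensor_mx1 => j r c; rewrite ffunE. Qed.

Lemma pauli_conj a b : P b *m P a *m P b = pauli_sign b a *: P a.
Proof. by rewrite pauli_comm -scalemxAl -mulmxA pauli_sq mulmx1. Qed.

Lemma natr_pow2_neq0 : (d%:R : C) != 0.
Proof. by rewrite pnatr_eq0 -lt0n expn_gt0. Qed.

Lemma natr_pow2_subr1_neq0 : (0 < n)%N -> (d%:R - 1 : C) != 0.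
Proof.
by move=> n_gt0; rewrite subr_eq0 pnatr_eq1 -[1%N](expn0 2) eqn_exp2l // -lt0n.
Qed.

Lemma pauli_trace_mul a b : \tr (P a *m P b) = (a == b)%:R * d%:R.
Proof.
rewrite !pauliE tensor_mxM tensor_mx_trace.
under eq_bigr do rewrite pauli1_trace_mul.
have [<- | neq_ab] := eqVneq a b.
  under eq_bigr do rewrite eqxx.
  by rewrite prodr_const card_ord natrX mul1r.
have [j neq_j] : exists j, a j != b j.
  apply/existsP; move: neq_ab; apply: contraR; rewrite negb_exists => /forallP eq_ab.
  by apply/eqP/ffunP => j; apply/eqP; rewrite -[_ == _]negbK eq_ab.
by rewrite (bigD1 j) //= (negbTE neq_j) mul0rn !mul0r.
Qed.

Lemma pauli_scale_inj a b (e : C) : P a = e *: P b -> a = b.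
Proof.
move=> eq_ab; have := pauli_trace_mul a a.
rewrite eqxx mul1r {1}eq_ab -scalemxAl mxtraceZ pauli_trace_mul.
have [// | _] := eqVneq b a; rewrite mul0r mulr0 => /esym/eqP.
by rewrite (negbTE natr_pow2_neq0).
Qed.

Lemma pauli_idx0 a : P a (idx0 n) (idx0 n) = (diag_label a)%:R.
Proof.
have bit0 j : bit (idx0 n) j = false by rewrite /bit /= div0n.
rewrite mxE /diag_label; under eq_bigr do rewrite !bit0 pauli1_00.
case: forallP => [diag_a | /forallP].
  by rewrite big1 // => j _; rewrite diag_a.
rewrite negb_forall => /existsP [j]; rewrite negbK => aj2.
by rewrite (bigD1 j) //= aj2 mul0r.
Qed.

Lemma pauli_sign_sqr a b : pauli_sign a b ^+ 2 = 1.
Proof. by rewrite -prodrXl big1 // => j _; rewrite pauli1_sign_sqr. Qed.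

Lemma pauli_phase4 a b : pauli_phase a b ^+ 4 = 1.
Proof. by rewrite -prodrXl big1 // => j _; rewrite pauli1_phase4. Qed.

Lemma pauli_signC a b : pauli_sign a b = pauli_sign b a.
Proof. by apply: eq_bigr => j _; rewrite pauli1_signC. Qed.

Lemma pauli_sign_pm a b : pauli_sign a b = 1 \/ pauli_sign a b = -1.
Proof.
by have /eqP := pauli_sign_sqr a b; rewrite sqrf_eq1 => /orP [] /eqP ->; [left | right].
Qed.

End Pauli.

Section ZFourier.
Variables (C : numClosedFieldType) (n : nat).
Local Notation d := (2 ^ n)%N.
Implicit Types (z : {ffun 'I_n -> bool}) (A B : 'M[C]_d).

Definition zchar z (x : 'I_d) : C := \prod_j (if z j && bit x j then -1 else 1).

Lemma Zop_mxE z (x y : 'I_d) : (Zop z : 'M[C]_d) x y = (x == y)%:R * zchar z x.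
Proof.
rewrite mxE (prod_bits_diag (F := fun j => pauli1 (zlabel z j))) => [|j r c];
  last by rewrite ffunE; case: (z j); case: r; case: c.
by congr (_ * _); apply: eq_bigr => j _; rewrite ffunE; case: (z j); case: (bit x j).
Qed.

Lemma trace_Zop_mul z A : \tr (Zop z *m A) = \sum_x zchar z x * A x x.
Proof.
apply: eq_bigr => x _; rewrite mxE (bigD1 x) //= big1 => [|y neq_yx].
  by rewrite Zop_mxE eqxx mul1r addr0.
by rewrite Zop_mxE eq_sym (negbTE neq_yx) !mul0r.
Qed.

Lemma zchar_orth (x y : 'I_d) : \sum_z zchar z x * zchar z y = (x == y)%:R * d%:R.
Proof.
under eq_bigr do rewrite -big_split /=.
rewrite -(bigA_distr_bigA (fun j (b : bool) =>
  (if b && bit x j then -1 else 1) * (if b && bit y j then -1 else 1) : C)) /=.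
rewrite (prod_bits_diag (F := fun j r c => \sum_(b : bool)
  (if b && r then -1 else 1) * (if b && c then -1 else 1))) => [|j [] [] //= _];
  rewrite ?big_bool /= ?mulN1r ?mulrN1 ?mulr1 ?addNr ?addrN //.
rewrite (eq_bigr (fun _ => 2%:R)) ?prodr_const ?card_ord ?natrX // => j _.
by rewrite big_bool /=; case: (bit x j); rewrite ?mulN1r ?opprK ?mulr1.
Qed.

Lemma sum_diag_mul A B :
  \sum_x A x x * B x x = d%:R^-1 * \sum_z \tr (Zop z *m A) * \tr (Zop z *m B).
Proof.
have expand_z z : \tr (Zop z *m A) * \tr (Zop z *m B) =
    \sum_x \sum_y (A x x * B y y) * (zchar z x * zchar z y).
  rewrite !trace_Zop_mul big_distrl /=; apply: eq_bigr => x _.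
  by rewrite big_distrr /=; apply: eq_bigr => y _; rewrite mulrACA mulrC.
under [in RHS]eq_bigr do rewrite expand_z.
rewrite exchange_big; under [in RHS]eq_bigr do rewrite exchange_big.
under [in RHS]eq_bigr do under eq_bigr do rewrite -big_distrr /= zchar_orth.
rewrite big_distrr; apply: eq_bigr => x _.
rewrite (bigD1 x) //= big1 => [|y neq_yx]; last by rewrite eq_sym (negbTE neq_yx) !mul0r mulr0.
by rewrite eqxx mul1r addr0 mulrCA mulVf ?mulr1 // natr_pow2_neq0.
Qed.

End ZFourier.

Section Adjoint.
Variables (C : numClosedFieldType) (m : nat).
Implicit Types A B g h : 'M[C]_m.

Lemma adjmxM A B : adj (A *m B) = adj B *m adj A.
Proof. by rewrite /adj map_mxM trmx_mul. Qed.

Lemma adjmxZ (c : C) A : adj (c *: A) = c^* *: adj A.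
Proof. by apply/matrixP => i j; rewrite !mxE rmorphM. Qed.

Lemma adjmxD A B : adj (A + B) = adj A + adj B.
Proof. by apply/matrixP => i j; rewrite !mxE rmorphD. Qed.

Lemma adjmx1 : adj (1%:M : 'M[C]_m) = 1%:M.
Proof. by rewrite /adj map_mx1 trmx1. Qed.

Lemma adj_unit_scale (c : C) A B : `|c| = 1 ->
  adj (c *: A) *m B *m (c *: A) = adj A *m B *m A.
Proof.
move=> norm_c; rewrite adjmxZ -scalemxAl -scalemxAr -scalemxAl scalerA.
by rewrite -normCK norm_c expr1n scale1r.
Qed.

Lemma unitaryV g : unitary g -> adj g *m g = 1%:M.
Proof. exact: mulmx1C. Qed.

Lemma unitary_mul g h : unitary g -> unitary h -> unitary (g *m h).
Proof. by move=> ug uh; rewrite /unitary adjmxM mulmxA -(mulmxA g) uh mulmx1. Qed.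

Lemma omegaK g A : unitary g -> adj g *m omega g A *m g = A.
Proof. by move=> ug; rewrite /omega !mulmxA unitaryV // mul1mx -mulmxA unitaryV // mulmx1. Qed.

Lemma unitary_conjK g A : unitary g -> g *m (adj g *m A *m g) *m adj g = A.
Proof. by move=> ug; rewrite !mulmxA ug mul1mx -mulmxA ug mulmx1. Qed.

End Adjoint.

Section SignedPauli.
Variables (C : numClosedFieldType) (n : nat).
Local Notation d := (2 ^ n)%N.
Local Notation P := (@pauli C n).
Implicit Types (a b : label n) (M g h : 'M[C]_d).

Definition signed_pauli M b : bool := (M == P b) || (M == - P b).

Lemma Xi_isE z g a : Xi_is z g a = signed_pauli (adj g *m Zop z *m g) a.
Proof. by []. Qed.

Lemma signed_pauliP M b : reflect (M = P b \/ M = - P b) (signed_pauli M b).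
Proof. by apply: (iffP orP) => [] [] /eqP; [left | right | left | right]. Qed.

Lemma signed_pauliE M b : signed_pauli M b -> exists2 e : C, e ^+ 2 = 1 & M = e *: P b.
Proof.
case/signed_pauliP => ->; first by exists 1; rewrite ?expr1n ?scale1r.
by exists (-1); rewrite ?sqrrN ?expr1n ?scaleN1r.
Qed.

Lemma signed_pauli_scale M b (e : C) : e ^+ 2 = 1 -> M = e *: P b -> signed_pauli M b.
Proof.
move/eqP; rewrite sqrf_eq1 => /orP [] /eqP -> ->; apply/signed_pauliP.
  by left; rewrite scale1r.
by right; rewrite scaleN1r.
Qed.

Lemma signed_pauli_inj M a b : signed_pauli M a -> signed_pauli M b -> a = b.
Proof.
move=> /signed_pauliE [e e2 ->] /signed_pauliE [e' e'2 /(congr1 ( *:%R e))].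
by rewrite !scalerA -expr2 e2 scale1r => /pauli_scale_inj.
Qed.

Lemma signed_pauli_map (X Y M : 'M[C]_d) a b :
  signed_pauli M a -> signed_pauli (X *m P a *m Y) b -> signed_pauli (X *m M *m Y) b.
Proof.
by case/signed_pauliP => -> /signed_pauliP [] eq_b; apply/signed_pauliP;
  rewrite ?mulmxN ?mulNmx eq_b ?opprK; [left | right | right | left].
Qed.

Lemma signed_pauli_adj_conj g a c : unitary g ->
  signed_pauli (omega g (P a)) c -> signed_pauli (adj g *m P c *m g) a.
Proof.
move=> ug /signed_pauliE [e e2 eq_c]; apply: (signed_pauli_scale e2).
by rewrite -(omegaK (P a) ug) eq_c -scalemxAr -scalemxAl scalerA -expr2 e2 scale1r.
Qed.

Lemma clifford1 : clifford (1%:M : 'M[C]_d).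
Proof.
split=> [|a]; first by rewrite /unitary adjmx1 mulmx1.
by exists a; left; rewrite /omega mul1mx adjmx1 mulmx1.
Qed.

Lemma clifford_mul g h : clifford g -> clifford h -> clifford (g *m h).
Proof.
move=> [ug cg] [uh ch]; split=> [|a]; first exact: unitary_mul.
have [b /signed_pauliP hb] := ch a; have [c /signed_pauliP gc] := cg b.
exists c; apply/signed_pauliP.
have -> : omega (g *m h) (P a) = g *m omega h (P a) *m adj g.
  by rewrite /omega adjmxM !mulmxA.
exact: signed_pauli_map hb gc.
Qed.

(* Conjugation by g permutes the Pauli labels up to sign, so sigma_c has a preimage. *)
Lemma clifford_adj_pauli g c : clifford g ->
  exists a, signed_pauli (adj g *m P c *m g) a.
Proof.
move=> [ug cg].
pose f a := odflt a [pick b | signed_pauli (omega g (P a)) b].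
have fP a : signed_pauli (omega g (P a)) (f a).
  rewrite /f; case: pickP => [b // | none_b].
  by have [b /signed_pauliP] := cg a; rewrite none_b.
have f_inj : injective f.
  move=> a1 a2 eq_f; apply: (@signed_pauli_inj (adj g *m P (f a1) *m g)).
    exact: signed_pauli_adj_conj (fP a1).
  by rewrite eq_f; apply: signed_pauli_adj_conj (fP a2).
have [f' _ f'K] := injF_bij f_inj.
by exists (f' c); apply: signed_pauli_adj_conj; rewrite // -{2}(f'K c).
Qed.

End SignedPauli.

Section PauliSwap.
Variables (C : numClosedFieldType) (n : nat).
Local Notation d := (2 ^ n)%N.
Local Notation P := (@pauli C n).
Local Notation sign := (@pauli_sign C n).
Implicit Types (a b c : label n) (M N : 'M[C]_d).

Definition phased_pauli M := exists (k : C) b, k ^+ 4 = 1 /\ M = k *: P b.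

Lemma phased_pauliN M : phased_pauli M -> phased_pauli (- M).
Proof.
case=> k [b [k4 ->]]; exists (- k), b; split; last by rewrite scaleNr.
by rewrite -mulN1r exprMn k4 mulr1 -signr_odd.
Qed.

Lemma phased_pauliM M N : phased_pauli M -> phased_pauli N -> phased_pauli (M *m N).
Proof.
case=> k [b [k4 ->]] [l [c [l4 ->]]].
exists (k * l * pauli_phase C b c), (label_add b c); split.
  by rewrite !exprMn k4 l4 pauli_phase4 !mul1r.
by rewrite -scalemxAl -scalemxAr pauli_mul !scalerA.
Qed.

Lemma hermitian_phased_pauli M : adj M = M -> phased_pauli M -> exists b, signed_pauli M b.
Proof.
move=> herm_M [k [b [k4 eq_M]]]; exists b; rewrite eq_M in herm_M *.
have k_real : k \is Num.real.
  apply/CrealP; move/eqP: herm_M; rewrite adjmxZ pauli_adj -subr_eq0 -scalerBl.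
  rewrite scalemx_eq0 subr_eq0 => /orP [/eqP // | /eqP P0].
  by have := pauli_sq C b; rewrite P0 mul0mx => /matrixP/(_ (idx0 n) (idx0 n));
    rewrite !mxE eqxx => /eqP; rewrite eq_sym oner_eq0.
have /eqP : (k ^+ 2) ^+ 2 = 1 by rewrite -exprM.
rewrite sqrf_eq1 => /orP [] /eqP k2; first exact: signed_pauli_scale k2 _.
by move: k_real; rewrite realEsqr k2 ler0N1.
Qed.

Definition pauli_swap a b : 'M[C]_d := (sqrtC 2)^-1 *: (P a + P b).

Lemma inv_sqrtC2_sq : (sqrtC 2)^-1 * (sqrtC 2)^-1 = 2^-1 :> C.
Proof. by rewrite -invfM -expr2 sqrtCK. Qed.

Lemma pauli_swap_adj a b : adj (pauli_swap a b) = pauli_swap a b.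
Proof.
have conj_sqrt2 : (sqrtC 2 : C)^* = sqrtC 2.
  by apply: conj_Creal; rewrite ger0_real // sqrtC_ge0 ler0n.
by rewrite /pauli_swap adjmxZ adjmxD !pauli_adj fmorphV; congr (_^-1 *: _); exact: conj_sqrt2.
Qed.

Lemma scaler_half_double M : 2^-1 *: (M + M) = M.
Proof. by rewrite -mulr2n -scaler_nat scalerA mulVf ?pnatr_eq0 // scale1r. Qed.

Variables a b : label n.
Hypothesis anti_ab : sign a b = -1.

Lemma pauli_swap_unitary : unitary (pauli_swap a b).
Proof.
rewrite /unitary pauli_swap_adj /pauli_swap -scalemxAl -scalemxAr scalerA inv_sqrtC2_sq.
rewrite mulmxDl !mulmxDr !pauli_sq (pauli_comm C a b) anti_ab scaleN1r.
by rewrite -addrA addKr scaler_half_double.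
Qed.

Lemma pauli_swap_conj : adj (pauli_swap a b) *m P a *m pauli_swap a b = P b.
Proof.
rewrite pauli_swap_adj /pauli_swap -!scalemxAl -!scalemxAr !scalerA inv_sqrtC2_sq.
rewrite mulmxDl !mulmxDr !mulmxDl pauli_sq mul1mx -mulmxA pauli_sq mulmx1 mul1mx.
rewrite pauli_conj pauli_signC anti_ab scaleN1r.
by rewrite [P b + - P a]addrC addrACA addrN add0r scaler_half_double.
Qed.

Lemma pauli_swap_sandwich c :
  pauli_swap a b *m P c *m pauli_swap a b = 2^-1 *: ((sign a c + sign b c) *: P c +
     (sign c b - sign c a) *: (P a *m P b *m P c)).
Proof.
rewrite /pauli_swap -!scalemxAl -!scalemxAr !scalerA inv_sqrtC2_sq; congr (_ *: _).
rewrite mulmxDl !mulmxDr !mulmxDl !pauli_conj.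
have acb : P a *m P c *m P b = sign c b *: (P a *m P b *m P c).
  by rewrite -mulmxA pauli_comm -scalemxAr mulmxA.
have bca : P b *m P c *m P a = - sign c a *: (P a *m P b *m P c).
  rewrite -mulmxA (pauli_comm C c a) -scalemxAr mulmxA (pauli_comm C b a) -scalemxAl.
  by rewrite scalerA (pauli_signC C b a) anti_ab mulrN1.
rewrite acb bca scaleNr !scalerDl scaleNr.
by rewrite [X in _ + X = _]addrC addrACA (addrC (- _)).
Qed.

(* The conjugate of sigma_c is either +-sigma_c or a fourth root of unity times
   sigma_a sigma_b sigma_c; being Hermitian, it is a signed Pauli in both cases. *)
Lemma pauli_swap_clifford : clifford (pauli_swap a b).
Proof.
split=> [|c]; first exact: pauli_swap_unitary.
rewrite /omega pauli_swap_adj.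
have herm : adj (pauli_swap a b *m P c *m pauli_swap a b) =
    pauli_swap a b *m P c *m pauli_swap a b.
  by rewrite !adjmxM pauli_swap_adj pauli_adj mulmxA.
suff /(hermitian_phased_pauli herm) [b' /signed_pauliP] : phased_pauli
  (pauli_swap a b *m P c *m pauli_swap a b) by exists b'.
have phased_P e : phased_pauli (P e) by exists 1, e; rewrite expr1n scale1r.
have phased_abc := phased_pauliM (phased_pauliM (phased_P a) (phased_P b)) (phased_P c).
rewrite pauli_swap_sandwich (pauli_signC C c a) (pauli_signC C c b).
case: (pauli_sign_pm C a c) => ->; case: (pauli_sign_pm C b c) => ->.
- by rewrite subrr scale0r addr0 scalerDl scale1r scaler_half_double.
- rewrite addrN scale0r add0r -opprD scaleNr scalerN scalerDl scale1r.
  by rewrite scaler_half_double; apply: phased_pauliN.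
- by rewrite addNr scale0r add0r opprK scalerDl scale1r scaler_half_double.
- rewrite -opprD subrr scale0r addr0 scaleNr scalerN scalerDl scale1r.
  by rewrite scaler_half_double; apply: phased_pauliN.
Qed.

End PauliSwap.

Section AnticommutingChain.
Variables (C : numClosedFieldType) (n : nat) (i0 : 'I_n).
Local Notation sign := (@pauli_sign C n).
Implicit Types a b c : label n.

Definition xlabel : label n := [ffun j => if j == i0 then (false, true) else (false, false)].

Lemma pauli_sign_supp1 a c : (forall j, j != i0 -> c j = (false, false)) ->
  sign a c = pauli1_sign C (a i0) (c i0).
Proof.
move=> c_supp; rewrite /pauli_sign (bigD1 i0) //= big1 ?mulr1 // => j neq_j.
by rewrite c_supp // pauli1_signr1.
Qed.

Lemma pauli_sign_supp2 a c k : k != i0 -> (forall j, j != i0 -> j != k -> c j = (false, false)) ->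
  sign a c = pauli1_sign C (a i0) (c i0) * pauli1_sign C (a k) (c k).
Proof.
move=> neq_k c_supp; rewrite /pauli_sign (bigD1 i0) //= (bigD1 k) /=; last by rewrite neq_k.
by rewrite big1 ?mulr1 // => j /andP [? ?]; rewrite c_supp // pauli1_signr1.
Qed.

Lemma anticommuting_chain a : a != label0 n ->
  sign a xlabel = -1 \/ exists c, sign a c = -1 /\ sign c xlabel = -1.
Proof.
move=> a_neq0.
have x_supp j : j != i0 -> xlabel j = (false, false) by rewrite ffunE => /negbTE ->.
have x_i0 : xlabel i0 = (false, true) by rewrite ffunE eqxx.
pose z1 : label n := [ffun j => if j == i0 then (true, false) else (false, false)].
have z1_supp j : j != i0 -> z1 j = (false, false) by rewrite ffunE => /negbTE ->.
have z1_i0 : z1 i0 = (true, false) by rewrite ffunE eqxx.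
case a_i0: (a i0) => [[] []].
- by left; rewrite pauli_sign_supp1 // a_i0 x_i0.
- by left; rewrite pauli_sign_supp1 // a_i0 x_i0.
- by right; exists z1; rewrite !pauli_sign_supp1 // a_i0 x_i0 z1_i0.
have [k a_k] : exists k, a k != (false, false).
  apply/existsP; move: a_neq0; apply: contraR; rewrite negb_exists => /forallP a0.
  by apply/eqP/ffunP => j; rewrite ffunE; apply/eqP; rewrite -[_ == _]negbK a0.
have neq_k : k != i0 by apply: contraNneq a_k => ->; rewrite a_i0.
pose flip (s : bool * bool) := if s == (true, false) then (false, true) else (true, false).
pose c : label n := [ffun j => if j == i0 then (true, false)
                               else if j == k then flip (a k) else (false, false)].
have c_supp j : j != i0 -> j != k -> c j = (false, false).
  by rewrite ffunE => /negbTE -> /negbTE ->.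
have c_i0 : c i0 = (true, false) by rewrite ffunE eqxx.
have c_k : c k = flip (a k) by rewrite ffunE (negbTE neq_k) eqxx.
right; exists c; split; last by rewrite pauli_sign_supp1 ?c_i0 ?x_i0.
rewrite (pauli_sign_supp2 _ neq_k c_supp) a_i0 c_i0 c_k pauli1_sign1r mul1r.
by move: a_k; rewrite /flip; case: (a k) => [[] []].
Qed.

End AnticommutingChain.

Section Xi.
Variables (C : numClosedFieldType) (n : nat).
Local Notation d := (2 ^ n)%N.
Local Notation P := (@pauli C n).
Implicit Types (a b : label n) (z : {ffun 'I_n -> bool}) (g h : 'M[C]_d).

Definition zvec0 : {ffun 'I_n -> bool} := [ffun => false].

Lemma Zop_zvec0 : Zop zvec0 = 1%:M :> 'M[C]_d.
Proof. by rewrite -(pauli0 C n); congr pauli; apply/ffunP => j; rewrite !ffunE. Qed.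

Lemma Xi_is_uniq z g a b : Xi_is z g a -> Xi_is z g b -> a = b.
Proof. exact: signed_pauli_inj. Qed.

Lemma Xi_is_exists z g : clifford g -> exists a, Xi_is z g a.
Proof. exact: clifford_adj_pauli. Qed.

Lemma sum_Xi_is (V : nmodType) z g (F : label n -> V) a : Xi_is z g a ->
  \sum_(b | Xi_is z g b) F b = F a.
Proof.
move=> Xi_a; rewrite (bigD1 a) //= big1 ?addr0 // => b /andP [Xi_b neq_ba].
by move: neq_ba; rewrite (Xi_is_uniq Xi_b Xi_a) eqxx.
Qed.

Lemma Xi_is_label0 z g : unitary g -> Xi_is z g (label0 n) = (z == zvec0).
Proof.
move=> ug; apply/idP/eqP => [Xi_0 | ->]; last first.
  by apply/signed_pauliP; left; rewrite Zop_zvec0 mulmx1 unitaryV // pauli0.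
have P0_conj : signed_pauli (g *m P (label0 n) *m adj g) (label0 n).
  by apply/signed_pauliP; left; rewrite pauli0 mulmx1 ug.
have := signed_pauli_map Xi_0 P0_conj; rewrite unitary_conjK // => Z_0.
have Z_z : signed_pauli (Zop z : 'M[C]_d) (zlabel z) by apply/signed_pauliP; left.
have /ffunP eq_z := signed_pauli_inj Z_z Z_0.
by apply/ffunP => j; have := eq_z j; rewrite !ffunE => -[].
Qed.

Lemma Xi_is_phase z g h b : phase_eq g h -> Xi_is z g b = Xi_is z h b.
Proof. by case=> c [norm_c ->]; rewrite !Xi_isE adj_unit_scale. Qed.

Lemma Xi_is_mulr z g h a b : unitary h -> adj h *m P a *m h = P b ->
  Xi_is z (g *m h) b = Xi_is z g a.
Proof.
move=> uh h_ab; rewrite !Xi_isE; have -> : adj (g *m h) *m Zop z *m (g *m h) =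
    adj h *m (adj g *m Zop z *m g) *m h by rewrite adjmxM !mulmxA.
apply/idP/idP => [Xi_b | Xi_a]; last first.
  by apply: signed_pauli_map Xi_a _; rewrite h_ab; apply/signed_pauliP; left.
have h_ba : signed_pauli (h *m P b *m adj h) a.
  by apply/signed_pauliP; left; rewrite -h_ab unitary_conjK.
by have := signed_pauli_map Xi_b h_ba; rewrite unitary_conjK.
Qed.

End Xi.

Section Weights.
Variables (C : numClosedFieldType) (n : nat).
Local Notation d := (2 ^ n)%N.
Local Notation P := (@pauli C n).
Variable cl : seq 'M[C]_d.
Hypothesis cl_transversal : clifford_transversal cl.
Implicit Types (a b : label n) (g h : 'M[C]_d).

Lemma cl_clifford g : g \in cl -> clifford g.
Proof. by case: cl_transversal => _ + _ _; apply. Qed.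

Lemma sum_cl_inv : \sum_(g <- cl) (size cl)%:R^-1 = 1 :> C.
Proof.
have [_ _ rep _] := cl_transversal; have [g g_cl _] := rep _ (clifford1 C n).
have size_cl : (size cl)%:R != 0 :> C by rewrite pnatr_eq0 -lt0n; case: (cl) g_cl.
by rewrite (big_nth 0) sumr_const_nat subn0 -[LHS]mulr_natr mulVf.
Qed.

Lemma sum_s_wt : \sum_a s_wt cl a = d%:R.
Proof.
rewrite exchange_big /= (eq_bigr (fun _ => 1)) => [|z _].
  by rewrite sumr_const card_ffun card_bool card_ord natrX.
under eq_bigr do rewrite big_mkcond /=.
rewrite exchange_big /= -[RHS]sum_cl_inv big_seq [RHS]big_seq.
apply: eq_bigr => g g_cl; have [a Xi_a] := Xi_is_exists z (cl_clifford g_cl).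
by rewrite -big_mkcond /= (sum_Xi_is (fun _ => (size cl)%:R^-1) Xi_a).
Qed.

Lemma s_wt0 : s_wt cl (label0 n) = 1.
Proof.
have Xi0 z g : g \in cl -> Xi_is z g (label0 n) = (z == zvec0 n).
  by move=> /cl_clifford [ug _]; apply: Xi_is_label0.
rewrite /s_wt (bigD1 (zvec0 n)) //= [X in _ + X]big1 ?addr0 => [|z neq_z0].
  rewrite -[RHS]sum_cl_inv big_seq_cond [RHS]big_seq_cond; apply: eq_bigl => g.
  by case: (boolP (g \in cl)) => //= g_cl; rewrite Xi0 // eqxx.
by rewrite big_seq_cond big1 // => g /andP [g_cl]; rewrite Xi0 // (negbTE neq_z0).
Qed.

Lemma transversal_mulr h : clifford h -> exists2 phi : 'M[C]_d -> 'M[C]_d,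
  perm_eq (map phi cl) cl & {in cl, forall g, phase_eq (g *m h) (phi g)}.
Proof.
have [uniq_cl cl_cliff cl_rep cl_sep] := cl_transversal.
move=> h_cliff; pose R g r := g \in cl -> r \in cl /\ phase_eq (g *m h) r.
have [phi phiP] : exists phi, forall g, R g (phi g).
  apply: functional_choice => g; rewrite /R; case: (boolP (g \in cl)) => g_cl.
    by have [r r_cl] := cl_rep _ (clifford_mul (cl_cliff g g_cl) h_cliff); exists r.
  by exists g.
have uh := h_cliff.1.
have phi_inj : {in cl &, injective phi}.
  move=> g1 g2 g1_cl g2_cl eq_phi.
  have [_ [c1 [c1_norm phi1]]] := phiP g1 g1_cl.
  have [_ [c2 [c2_norm phi2]]] := phiP g2 g2_cl.
  have c2_neq0 : c2 != 0 by rewrite -normr_eq0 c2_norm oner_neq0.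
  have mulhK g : g = g *m h *m adj h by rewrite -mulmxA uh mulmx1.
  apply: cl_sep => //; exists (c1 / c2); split; first by rewrite normf_div c1_norm c2_norm divr1.
  by rewrite (mulhK g1) (mulhK g2) phi1 phi2 eq_phi -!scalemxAl scalerA divfK.
exists phi => [|g g_cl]; last by case: (phiP g g_cl).
have uniq_phi_cl : uniq (map phi cl) by rewrite map_inj_in_uniq.
have sub : {subset map phi cl <= cl} by move=> _ /mapP [g g_cl ->]; case: (phiP g g_cl).
apply: uniq_perm => //; apply: (uniq_min_size uniq_phi_cl sub _).2.
by rewrite size_map.
Qed.

Lemma s_wt_conj h a b : clifford h -> adj h *m P a *m h = P b -> s_wt cl a = s_wt cl b.
Proof.
move=> h_cliff h_ab; have [phi perm_phi phiP] := transversal_mulr h_cliff.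
rewrite /s_wt; apply: eq_bigr => z _.
rewrite -[RHS](perm_big _ perm_phi) big_map big_seq_cond [RHS]big_seq_cond.
apply: eq_bigl => g; case: (boolP (g \in cl)) => //= g_cl.
by rewrite -(Xi_is_phase _ _ (phiP g g_cl)) (Xi_is_mulr _ _ h_cliff.1 h_ab).
Qed.

Variable i0 : 'I_n.

Lemma s_wt_xlabel a : a != label0 n -> s_wt cl a = s_wt cl (xlabel i0).
Proof.
move=> a_neq0.
have swap_conj u v : pauli_sign C u v = -1 -> s_wt cl u = s_wt cl v.
  by move=> anti_uv; apply: s_wt_conj (pauli_swap_clifford anti_uv) (pauli_swap_conj anti_uv).
case: (anticommuting_chain C i0 a_neq0) => [anti_ax | [c [anti_ac anti_cx]]].
  exact: swap_conj.
by rewrite (swap_conj _ _ anti_ac); apply: swap_conj.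
Qed.

Lemma s_wt_nonzero a : a != label0 n -> s_wt cl a = ((2 ^ n)%:R + 1)^-1.
Proof.
move=> a_neq0; rewrite s_wt_xlabel //; set s := s_wt cl (xlabel i0).
have := sum_s_wt; rewrite (bigD1 (label0 n)) //= s_wt0.
rewrite (eq_bigr (fun _ => s)) => [|b b_neq0]; last exact: s_wt_xlabel.
rewrite sumr_const cardC1 card_ffun card_prod card_bool card_ord expnMn.
rewrite -(mulr_natr s) -subn1 natrB ?muln_gt0 ?expn_gt0 // natrM => sum_eq.
have dm1_neq0 : (2 ^ n)%:R - 1 != 0 :> C.
  by apply: natr_pow2_subr1_neq0; case: (n) i0 => [[]|].
have dp1_neq0 : (2 ^ n)%:R + 1 != 0 :> C by rewrite natr1 pnatr_eq0.
apply: (mulIf dp1_neq0); rewrite mulVf //.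
apply: (mulIf dm1_neq0); rewrite mul1r -[X in _ = X - 1]sum_eq.
ring.
Qed.

End Weights.

Section Estimator.
Variables (C : numClosedFieldType) (n : nat).
Local Notation d := (2 ^ n)%N.
Local Notation P := (@pauli C n).
Local Notation E0 := (@Ebasis C n (idx0 n)).
Implicit Types (a b : label n) (M g : 'M[C]_d) (Q : {ffun label n -> C}).

Lemma trace_mul_delta M (i : 'I_d) : \tr (M *m delta_mx i i) = M i i.
Proof.
rewrite /mxtrace (bigD1 i) //= big1 ?addr0 => [|j neq_ji].
  by rewrite mxE (bigD1 i) //= big1 ?addr0 => [|k neq_ki]; rewrite !mxE ?eqxx ?mulr1 ?(negbTE neq_ki) ?mulr0.
by rewrite mxE big1 // => k _; rewrite mxE (negbTE neq_ji) andbF mulr0.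
Qed.

Lemma hs_Ebasis (f : 'M[C]_d -> 'M[C]_d) M (x : 'I_d) : hs (Ebasis x) f M = f M x x.
Proof.
have adj_delta : adj (delta_mx x x : 'M[C]_d) = delta_mx x x.
  by apply/matrixP => i j; rewrite !mxE; case: (i == x); case: (j == x); rewrite ?rmorph1 ?rmorph0.
by rewrite /hs /Ebasis adj_delta mxtrace_mulC trace_mul_delta.
Qed.

Lemma trace_pauli_channel Q a M :
  \tr (P a *m pauli_channel Q M) = (\sum_b Q b * pauli_sign C b a) * \tr (P a *m M).
Proof.
rewrite /pauli_channel mulmx_sumr raddf_sum big_distrl; apply: eq_bigr => b _ /=.
rewrite -scalemxAr mxtraceZ -mulrA; congr (_ * _).
by rewrite !mulmxA mxtrace_mulC !mulmxA pauli_conj -scalemxAl mxtraceZ.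
Qed.

Lemma eigE Q a : eig Q a = \sum_b Q b * pauli_sign C b a.
Proof.
rewrite /eig /hs pauli_adj trace_pauli_channel pauli_trace_mul eqxx mul1r.
by rewrite mulfK // natr_pow2_neq0.
Qed.

Lemma trace_omega_E0 g : unitary g -> \tr (omega g E0) = 1.
Proof.
move=> ug; rewrite /omega mxtrace_mulC mulmxA unitaryV // mul1mx.
by rewrite -[Ebasis _]mul1mx trace_mul_delta mxE eqxx.
Qed.

Lemma Xi_is_trace_E0 z g Q a : Xi_is z g a ->
  \tr (Zop z *m omega g (pauli_channel Q E0)) * \tr (Zop z *m omega g E0) =
  (diag_label a)%:R * eig Q a.
Proof.
move=> /signed_pauliE [e e2 Xi_a].
have trace_conj M : \tr (Zop z *m omega g M) = e * \tr (P a *m M).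
  by rewrite /omega !mulmxA mxtrace_mulC !mulmxA Xi_a -scalemxAl mxtraceZ.
rewrite !trace_conj trace_pauli_channel eigE trace_mul_delta pauli_idx0.
by rewrite mulrACA -expr2 e2 mul1r -mulrA -natrM mulnb andbb mulrC.
Qed.

Lemma expected_fhat_clifford q g : clifford g ->
  \sum_x outcome_prob q g x * fhat g x = (d%:R - 1)^-1 *
  \sum_z \sum_(a | diag_label a && (a != label0 n)) (if Xi_is z g a then eig (q g) a else 0).
Proof.
move=> [ug cg]; set A := omega g (pauli_channel (q g) E0); set B := omega g E0.
have term x : outcome_prob q g x * fhat g x =
    (d%:R - 1)^-1 * (d%:R * (A x x * B x x) - A x x).
  by rewrite /outcome_prob /fhat !hs_Ebasis -/A -/B; ring.
under eq_bigr do rewrite term.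
rewrite -big_distrr /=; congr (_ * _).
rewrite sumrB -big_distrr /= sum_diag_mul mulrA mulfV ?natr_pow2_neq0 // mul1r.
have trace_A : \sum_x A x x = \tr (Zop (zvec0 n) *m A) * \tr (Zop (zvec0 n) *m B).
  by rewrite Zop_zvec0 !mul1mx trace_omega_E0 // mulr1.
rewrite trace_A (bigD1 (zvec0 n)) //= addrC addrK.
rewrite [RHS](bigD1 (zvec0 n)) //= [X in _ = X + _]big1 ?add0r => [|a /andP [_ a_neq0]].
  apply: eq_bigr => z neq_z0.
  have [a Xi_a] := Xi_is_exists z (conj ug cg).
  have a_neq0 : a != label0 n.
    by apply: contraNneq neq_z0 => a0; rewrite -(Xi_is_label0 z ug) -a0.
  rewrite (Xi_is_trace_E0 _ Xi_a) big_mkcond (bigD1 a) //= big1 ?addr0 => [|b neq_ba].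
    by rewrite Xi_a a_neq0 andbT; case: (diag_label a); rewrite ?mul1r ?mul0r.
  by case: ifP => // _; case: ifP => // Xi_b; rewrite (Xi_is_uniq Xi_b Xi_a) eqxx in neq_ba.
case: ifP => // Xi_a; have Xi_0 : Xi_is (zvec0 n) g (label0 n) by rewrite Xi_is_label0.
by rewrite (Xi_is_uniq Xi_a Xi_0) eqxx in a_neq0.
Qed.

End Estimator.

Section Average.
Variables (C : numClosedFieldType) (n : nat).
Local Notation d := (2 ^ n)%N.
Variables (cl : seq 'M[C]_d) (q : 'M[C]_d -> {ffun label n -> C}).
Hypothesis cl_transversal : clifford_transversal cl.

(* s_a * lambdabar_a in the notation of the statement *)
Definition weighted_eig (a : label n) : C :=
  \sum_z \sum_(g <- cl | Xi_is z g a) (size cl)%:R^-1 * eig (q g) a.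

Lemma lambda_bar_nonzero (i0 : 'I_n) a : a != label0 n ->
  lambda_bar cl q a = (d%:R + 1) * weighted_eig a.
Proof. by move=> a_neq0; rewrite /lambda_bar (s_wt_nonzero cl_transversal i0 a_neq0) invrK. Qed.

Lemma expected_fhat_weighted : expected_fhat cl q =
  (d%:R - 1)^-1 * \sum_(a | diag_label a && (a != label0 n)) weighted_eig a.
Proof.
rewrite /expected_fhat big_seq.
under eq_bigr => g g_cl
  do rewrite (expected_fhat_clifford q (cl_clifford cl_transversal g_cl)) mulrCA.
rewrite -big_seq -big_distrr /=; congr (_ * _).
rewrite /weighted_eig; under [RHS]eq_bigr do under eq_bigr do rewrite big_mkcond /=.
under eq_bigr do rewrite big_distrr /=; under eq_bigr do under eq_bigr do rewrite big_distrr /=.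
rewrite exchange_big /=; under eq_bigr do rewrite exchange_big /=.
rewrite exchange_big /=; apply: eq_bigr => a _; apply: eq_bigr => z _; apply: eq_bigr => g _.
by case: ifP; rewrite ?mulr0.
Qed.

End Average.

Unset Implicit Arguments.

Theorem lemma7 (C : numClosedFieldType) (n : nat) (cl : seq 'M[C]_(2 ^ n))
  (q : 'M[C]_(2 ^ n) -> {ffun label n -> C}) :
  (0 < n)%N ->
  clifford_transversal cl ->
  (forall g, g \in cl -> prob_vec (q g)) ->
  expected_fhat cl q =
  ((2 ^ n)%:R + 1)^-1 *
  (((2 ^ n)%:R - 1)^-1 *
   \sum_(a : label n | diag_label a && (a != label0 n)) lambda_bar cl q a).
Proof.
(* The identity is linear in the channel weights, so they need not be stochastic. *)
move=> n_gt0 cl_transversal _.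
rewrite (expected_fhat_weighted q cl_transversal).
under [in RHS]eq_bigr => a /andP [_ a_neq0]
  do rewrite (lambda_bar_nonzero q cl_transversal (Ordinal n_gt0) a_neq0).
by rewrite -big_distrr /= mulrCA mulKf // natr1 pnatr_eq0.
Qed.
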